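(* Let $G$ be a locally compact group acting properly and cocompactly on a smooth manifold $Y$, $T:Y\to Y$ a diffeomorphism commuting with the $G$-action, $M=(Y\times\mathbb R)/\mathbb Z$ the suspension for $n\cdot(y,t)=(T^ny,t-n)$ with classes $[y,t]$, $G$-action $x[y,t]=[xy,t]$ and suspension flow $\varphi_s[y,t]=[y,t+s]$. Let $g\in G$, and assume that for every $n\in\mathbb Z\setminus\{0\}$ the set $Y^{g^{-1}T^n}$ is empty or discrete and $\det(1-D_y(g^{-1}T^n))\neq0$ for all $y\in Y^{g^{-1}T^n}$. For $n\in L_g(\varphi)$ let $$f_n:Y^{g^{-1}T^n}\to\{\text{connected components of }M^{g^{-1}\varphi_n}\},\qquad f_n(y)=\{[y,t]:t\in\mathbb R\}.$$ Then, for $n\in L_g(\varphi)$, the fibres of $f_n$ are finite if and only if $g$ lies in a compact subgroup of $G$.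
   Context: $L_g(\varphi)=\{l\in\mathbb R\setminus\{0\}:\exists m\in M,\ \varphi_l(m)=gm\}$ (for the suspension flow this is a subset of $\mathbb Z\setminus\{0\}$). $M^{g^{-1}\varphi_n}$ is the set of points of $M$ fixed by $g^{-1}\circ\varphi_n$. *)

From HB Require Import structures.
From mathcomp Require Import all_boot all_order all_algebra.
From mathcomp Require Import all_classical all_reals all_analysis.
From mathcomp Require Import generic_quotient.
From mathcomp Require Import Rstruct Rstruct_topology.
Set Implicit Arguments. Unset Strict Implicit. Unset Printing Implicit Defensive.
Import Order.TTheory GRing.Theory Num.Theory.
Import numFieldNormedType.Exports.
Local Open Scope classical_set_scope.
Local Open Scope ring_scope.

Notation RR := Rdefinitions.R.

Section TopGroup.
Variables (G : topologicalType) (mul : G -> G -> G) (inv : G -> G) (one : G).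

Record topological_group : Prop := {
  tg_assoc : forall x y z, mul x (mul y z) = mul (mul x y) z;
  tg_mul1 : forall x, mul one x = x;
  tg_mulV : forall x, mul (inv x) x = one;
  tg_mul_cont : continuous (fun p : G * G => mul p.1 p.2);
  tg_inv_cont : continuous inv }.

Definition locally_compact_group : Prop :=
  [/\ topological_group, hausdorff_space G & locally_compact [set: G]].

Definition compact_subgroup (K : set G) : Prop :=
  [/\ compact K, K one, (forall x y, K x -> K y -> K (mul x y))
    & (forall x, K x -> K (inv x))].
End TopGroup.

Section Smooth.
Variable d : nat.
Local Notation V := 'rV[RR]_d.

Fixpoint Ck (k : nat) (W : set V) (F : V -> V) : Prop :=
  match k with
  | 0 => forall x, W x -> {for x, continuous F}
  | k.+1 => (forall x, W x -> {for x, continuous F}) /\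
            forall v : V, (forall x, W x -> derivable F x v) /\
                          Ck k W (fun x => derive F x v)
  end.

Definition smooth_on (W : set V) (F : V -> V) : Prop := forall k, Ck k W F.
End Smooth.

Record atlas (Y : Type) (d : nat) := Atlas {
  at_index : Type;
  at_dom : at_index -> set Y;
  at_chart : at_index -> Y -> 'rV[RR]_d;
  at_inv : at_index -> 'rV[RR]_d -> Y }.      (* phi_i^{-1} on phi_i(U_i) *)
Arguments at_index {Y d} a.
Arguments at_dom {Y d} a i _.
Arguments at_chart {Y d} a i _.
Arguments at_inv {Y d} a i _.

Section Manifold.
Variables (Y : topologicalType) (d : nat) (A : atlas Y d).
Local Notation U := (at_dom A).
Local Notation phi := (at_chart A).
Local Notation psi := (at_inv A).

Record smooth_atlas : Prop := {
  sa_open : forall i, open (U i);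
  sa_cover : forall y, exists i, U i y;
  sa_img_open : forall i, open (phi i @` U i);
  sa_chart_cont : forall i y, U i y -> {for y, continuous (phi i)};
  sa_inv_cont : forall i v, (phi i @` U i) v -> {for v, continuous (psi i)};
  sa_invK : forall i y, U i y -> psi i (phi i y) = y;
  sa_trans : forall i j,
    smooth_on (phi i @` (U i `&` U j)) (phi j \o psi i) }.

Definition smooth_manifold : Prop :=
  [/\ hausdorff_space Y, second_countable (T := Y) & smooth_atlas].

Definition smooth_map (f : Y -> Y) : Prop :=
  (forall y, {for y, continuous f}) /\
  forall i j, smooth_on (phi i @` (U i `&` f @^-1` U j)) (phi j \o f \o psi i).

Definition diffeomorphism (f finv : Y -> Y) : Prop :=
  [/\ smooth_map f, smooth_map finv, cancel f finv & cancel finv f].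

(* Matrix of D_y f in the chart i (row-vector convention: row a is the
   derivative in the direction of the a-th basis vector). *)
Definition jac (f : Y -> Y) (i : at_index A) (y : Y) : 'M[RR]_d :=
  \matrix_(a < d, b < d)
     (derive (phi i \o f \o psi i) (phi i y) (delta_mx 0 a : 'rV[RR]_d)) 0 b.

Definition fixpts (f : Y -> Y) : set Y := [set y | f y = y].

Definition discrete_subset (S : set Y) : Prop :=
  forall y, S y -> exists2 N, nbhs y N & N `&` S = [set y].
End Manifold.

Section Actions.
Variables (G Y : topologicalType) (mul : G -> G -> G) (one : G)
  (act : G -> Y -> Y).

Definition continuous_action : Prop :=
  [/\ forall y, act one y = y,
      forall x z y, act (mul x z) y = act x (act z y)
    & continuous (fun p : G * Y => act p.1 p.2)].

Definition proper_action : Prop :=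
  forall K : set (Y * Y), compact K ->
    compact ((fun p : G * Y => (act p.1 p.2, p.2)) @^-1` K).

Definition cocompact_action : Prop :=
  exists2 K : set Y, compact K & forall y, exists x z, K z /\ y = act x z.
End Actions.

Definition Tpow (Y : Type) (T Tinv : Y -> Y) (n : int) : Y -> Y :=
  match n with
  | Posz k => iter k T
  | Negz k => iter k.+1 Tinv
  end.

(* Two points are identified iff they have the same normal form        *)
(* (T^{floor t} y, t - floor t) in the fundamental domain Y x [0,1);   *)
(* for T bijective with inverse Tinv this is exactly the orbit         *)
(* equivalence of the Z-action.                                        *)
Section Suspension.
Local Open Scope quotient_scope.
Variables (Y : topologicalType) (T Tinv : Y -> Y).

Definition susp_nf (p : Y * RR) : Y * RR :=
  (Tpow T Tinv (Num.floor p.2) p.1, p.2 - (Num.floor p.2)%:~R).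

Definition susp_rel (p q : Y * RR) : bool := susp_nf p == susp_nf q.

Lemma susp_rel_refl : reflexive susp_rel.
Proof. by move=> p; rewrite /susp_rel eqxx. Qed.
Lemma susp_rel_sym : symmetric susp_rel.
Proof. by move=> p q; rewrite /susp_rel eq_sym. Qed.
Lemma susp_rel_trans : transitive susp_rel.
Proof. by move=> q p r; rewrite /susp_rel => /eqP -> /eqP ->. Qed.

Definition susp_equiv := EquivRel susp_rel susp_rel_refl susp_rel_sym
  susp_rel_trans.

Definition susp : topologicalType := quotient_topology {eq_quot susp_equiv}.

Definition scls (y : Y) (t : RR) : susp := \pi_susp (y, t).

Definition sflow (s : RR) (m : susp) : susp :=
  scls (repr m).1 ((repr m).2 + s).

Definition sact (G : Type) (act : G -> Y -> Y) (x : G) (m : susp) : susp :=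
  scls (act x (repr m).1) (repr m).2.

Definition Lg (G : Type) (act : G -> Y -> Y) (g : G) : set RR :=
  [set l | l != 0 /\ exists m : susp, sflow l m = sact act g m].

Definition sfix (G : Type) (act : G -> Y -> Y) (ginv : G) (n : int) : set susp :=
  [set m | sact act ginv (sflow n%:~R m) = m].

Definition fn (y : Y) : set susp := [set scls y t | t in [set: RR]].
End Suspension.

Arguments sflow {Y} T Tinv s m.
Arguments sact {Y} T Tinv {G} act x m.
Arguments sfix {Y} T Tinv {G} act ginv n _.
Arguments fn {Y} T Tinv y _.

From HB Require Import structures.
From mathcomp Require Import all_boot all_order all_algebra.
From mathcomp Require Import all_classical all_reals all_analysis.
From mathcomp Require Import generic_quotient.
From mathcomp Require Import Rstruct Rstruct_topology.
Import Order.TTheory GRing.Theory Num.Theory.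
Local Open Scope classical_set_scope.
Local Open Scope ring_scope.
Set Implicit Arguments. Unset Strict Implicit. Unset Printing Implicit Defensive.

(* A point of Y^{g^-1 T^n} is a y with T^n y = g y, and f_n y = f_n y' exactly
   when y' = T^k y; so the fibre of f_n through y is the T-orbit of y, which
   stays inside the fixed-point set.  If that orbit is finite, y is T-periodic,
   hence g-periodic (g acts as T^n on fixed points), and by properness the
   stabiliser of the finite g-orbit of y is a compact subgroup containing g.
   Conversely, if g lies in a compact subgroup K, the g-orbit of y lies in
   K y ∩ Y^{g^-1 T^n}, a compact subset of a closed discrete set, hence is
   finite; so y is T^q-periodic for some q <> 0 and its T-orbit is finite. *)

Section IntegerPowers.
Variables (Y : Type) (T Tinv : Y -> Y).
Hypotheses (TK : cancel T Tinv) (KT : cancel Tinv T).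
Local Notation Tp := (Tpow T Tinv).

Lemma TpowS k y : Tp (k + 1) y = Tp k (T y).
Proof.
case: k => [m|[|m]].
- by rewrite -PoszD addn1 /Tpow iterSr.
- by rewrite /= TK.
- have -> : Negz m.+1 + 1 = Negz m by rewrite !NegzE -addn1 PoszD opprD addrK.
  by rewrite /Tpow [in RHS]iterSr TK.
Qed.

Lemma TpowB1 k y : Tp (k - 1) y = Tp k (Tinv y).
Proof. by rewrite -[in RHS](subrK 1 k) TpowS KT. Qed.

Lemma TpowD a b y : Tp (a + b) y = Tp a (Tp b y).
Proof.
elim/int_ind: b y => [|m IH|m IH] y; first by rewrite addr0.
  by rewrite -addn1 PoszD addrA !TpowS IH.
by rewrite -addn1 PoszD opprD addrA !TpowB1 IH.
Qed.

Lemma TpowK k : cancel (Tp k) (Tp (- k)).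
Proof. by move=> y; rewrite -TpowD addNr. Qed.

Lemma Tpow_period a b y : Tp a y = Tp b y -> Tp (b - a) y = y.
Proof. by move=> e; rewrite addrC TpowD -e TpowK. Qed.

Lemma Tpow_periodM q j y : Tp q y = y -> Tp (q * j) y = y.
Proof.
move=> e; have periodMn (m : nat) : Tp (q * m) y = y.
  elim: m => [|m IH]; first by rewrite mulr0.
  by rewrite -addn1 PoszD mulrDr mulr1 TpowD e IH.
case: j => m; first exact: periodMn.
by rewrite NegzE mulrN -{1}(periodMn m.+1) TpowK.
Qed.

Lemma Tpow_orbit_finite q y :
  q != 0 -> Tp q y = y -> finite_set (range (Tp^~ y)).
Proof.
move=> q0 e.
apply: (sub_finite_set _ (finite_image (fun r : nat => Tp r y) (finite_II `|q|))).
move=> _ [k _ <-]; exists `|(k %% q)%Z|%N.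
  by rewrite /= -(ltz_nat) gez0_abs ?modz_ge0 // ltz_mod.
rewrite gez0_abs ?modz_ge0 // -[in LHS](Tpow_periodM (k %/ q)%Z e).
by rewrite -TpowD mulrC addrC -divz_eq.
Qed.

Lemma morph_Tpow (h : Y -> Y) :
  {morph h : y / T y} -> forall k, {morph h : y / Tp k y}.
Proof.
move=> hT; have hTinv y : h (Tinv y) = Tinv (h y).
  by rewrite -[LHS]TK -hT KT.
elim/int_ind => [|m IH|m IH] y //.
  by rewrite -addn1 PoszD !TpowS IH hT.
by rewrite -addn1 PoszD opprD !TpowB1 IH hTinv.
Qed.
End IntegerPowers.

Section Suspension.
Variables (Y : topologicalType) (T Tinv : Y -> Y).
Hypotheses (TK : cancel T Tinv) (KT : cancel Tinv T).
Local Notation Tp := (Tpow T Tinv).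
Local Notation scls := (scls T Tinv).

Lemma scls_eqP y t y' t' :
  scls y t = scls y' t' <-> susp_nf T Tinv (y, t) = susp_nf T Tinv (y', t').
Proof. by split => [/eqmodP/eqP | e]; last by apply/eqmodP; rewrite /= /susp_rel e. Qed.

Lemma scls_Tpow k y t : scls (Tp k y) t = scls y (t + k%:~R).
Proof.
apply/scls_eqP; rewrite /susp_nf /= floorDrz ?intr_int // intrKfloor.
by rewrite (TpowD TK KT) rmorphD /= opprD addrACA subrr addr0.
Qed.

Lemma scls_inj t : injective (scls ^~ t).
Proof. by move=> y y' /scls_eqP[/(can_inj (TpowK TK KT _))]. Qed.

Lemma fn_Tpow k y : fn T Tinv (Tp k y) = fn T Tinv y.
Proof.
apply/seteqP; split => _ [t _ <-]; rewrite ?scls_Tpow.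
  by exists (t + k%:~R).
by exists (t - k%:~R) => //; rewrite scls_Tpow subrK.
Qed.

Lemma fn_eq_Tpow y y' : fn T Tinv y = fn T Tinv y' -> exists k, y = Tp k y'.
Proof.
move=> fn_eq; have : fn T Tinv y' (scls y 0) by rewrite -fn_eq; exists 0.
by move=> [t _ /scls_eqP[e _]]; exists (Num.floor t); rewrite e floor0.
Qed.

Lemma Lg_fixpt (G : Type) (act : G -> Y -> Y) g (n : int) :
  Lg T Tinv act g n%:~R -> exists y, Tp n y = act g y.
Proof.
by move=> [_ [m]]; rewrite /sflow /sact -scls_Tpow => /scls_inj; exists (repr m).1.
Qed.
End Suspension.

Lemma closed_fixpts (Y : topologicalType) (h : Y -> Y) :
  hausdorff_space Y -> continuous h -> closed (fixpts h).
Proof.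
move=> hY hc y; rewrite closureEcvg => -[F PF [Fy EF]].
apply: (@cvg_unique _ hY (h @ F)); first exact: cvg_trans (cvg_app h Fy) (hc y).
move=> N /Fy FN; apply: filterS (filterI FN (EF _ (fun x (hx : h x = x) => hx))).
by move=> x [Nx hx] /=; rewrite hx.
Qed.

Lemma compact_discrete_finite (Y : topologicalType) (S F : set Y) :
  compact S -> S `<=` F -> discrete_subset F -> finite_set S.
Proof.
move=> cS SF dF; have [->|/set0P[s0 _]] := eqVneq S set0; first exact: finite_set0.
(* [compact_cover] is stated for pointed spaces *)
pose Yp : ptopologicalType := HB.pack Y (isPointed.Build Y s0).
have : @cover_compact Yp S by rewrite -compact_cover.
pose isolating y := \bigcup_(O in [set O | open O /\ O `&` F `<=` [set y]]) O.
have isolating_open y : open (isolating y) by apply: bigcup_open => O [].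
move=> /(_ Y S isolating (fun y _ => isolating_open y))[].
  move=> s Ss; exists s => //.
  have [N] := dF s (SF s Ss); rewrite nbhsE => -[B [oB Bs] BN] NF.
  exists B => //; split => // w [Bw Fw].
  by rewrite -NF; split => //; apply: BN.
move=> D _ Scov; apply: (sub_finite_set _ (finite_fset D)) => s Ss.
have [i iD [W [oW WF] Ws]] := Scov s Ss.
by have /= -> := WF s (conj Ws (SF s Ss)).
Qed.

Lemma continuous_iter (Y : topologicalType) (f : Y -> Y) k :
  continuous f -> continuous (iter k f).
Proof.
move=> hf; elim: k => [|k IH] x /=; first exact: cvg_id.
exact: (continuous_comp (IH x) (hf _)).
Qed.

Lemma continuous_Tpow (Y : topologicalType) (T Tinv : Y -> Y) k :
  continuous T -> continuous Tinv -> continuous (Tpow T Tinv k).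
Proof. by case: k => m cT cTinv; apply: continuous_iter. Qed.

Lemma finite_range_repeat (T : Type) (f : nat -> T) :
  finite_set (range f) -> exists a b, (a < b)%N /\ f a = f b.
Proof.
move=> fin; apply: contrapT => noRepeat.
have inj : {in [set: nat] &, injective f}.
  move=> a b _ _ fab; case: (ltngtP a b) => // ab; exfalso; apply: noRepeat.
    by exists a, b.
  by exists b, a.
by apply: infinite_nat; rewrite -(eq_finite_set (inj_card_eq inj)).
Qed.

Lemma iter_periodic_finite (T : Type) (f : T -> T) P y :
  (0 < P)%N -> iter P f y = y -> finite_set (range (fun i => iter i f y)).
Proof.
move=> P0 per.
apply: (sub_finite_set _ (finite_image (fun i => iter i f y) (finite_II P))).
move=> _ [i _ <-]; exists (i %% P)%N; first by rewrite /= ltn_pmod.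
by rewrite {2}(divn_eq i P) addnC iterD iterM (iter_fix _ per).
Qed.

Section ActionLaws.
Variables (G Y : Type) (mul : G -> G -> G) (inv : G -> G) (one : G)
  (act : G -> Y -> Y).
Hypotheses (act1 : forall y, act one y = y)
  (actM : forall x z y, act (mul x z) y = act x (act z y))
  (mulV : forall x, mul (inv x) x = one).

Lemma actVK x : cancel (act x) (act (inv x)).
Proof. by move=> y; rewrite -actM mulV act1. Qed.

Lemma actKV x : cancel (act (inv x)) (act x).
Proof. by move=> y; apply: (can_inj (actVK (inv x))); rewrite actVK. Qed.

Lemma actVV x y : act (inv (inv x)) y = act x y.
Proof. by rewrite -{1}(actVK x y) actVK. Qed.

Lemma actVM x z y : act (inv (mul x z)) y = act (inv z) (act (inv x) y).
Proof.
have : act (mul x z) (act (inv z) (act (inv x) y)) = y by rewrite actM !actKV.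
by move=> {1}<-; rewrite actVK.
Qed.
End ActionLaws.

Section ProperAction.
Variables (G Y : topologicalType) (mul : G -> G -> G) (inv : G -> G) (one : G)
  (act : G -> Y -> Y).
Hypotheses (mulV : forall x, mul (inv x) x = one) (inv_cont : continuous inv)
  (act1 : forall y, act one y = y)
  (actM : forall x z y, act (mul x z) y = act x (act z y))
  (act_cont : continuous (fun p : G * Y => act p.1 p.2))
  (prop : proper_action act) (hY : hausdorff_space Y).

Lemma continuous_act x : continuous (act x).
Proof. exact: (continuous_curry act_cont).2. Qed.

Lemma continuous_act_orbit z : continuous (act ^~ z).
Proof.
move=> x; apply: (@continuous_comp _ _ _ (pair^~ z) (fun p : G * Y => act p.1 p.2)).
  by apply: cvg_pair; [exact: cvg_id | exact: cvg_cst].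
exact: act_cont.
Qed.

Definition setstab (O : set Y) : set G :=
  [set x | forall z, O z -> O (act x z) /\ O (act (inv x) z)].

Lemma setstab_closed O : closed O -> closed (setstab O).
Proof.
move=> cO; have -> : setstab O =
    \bigcap_(z in O) (act ^~ z @^-1` O `&` (act ^~ z \o inv) @^-1` O).
  by apply/seteqP; split => x Ox z Oz; [exact: Ox | have [] := Ox z Oz].
apply: closed_bigI => z _; apply: closedI; apply: preimage_closed => // x _.
  exact: continuous_act_orbit.
by apply: continuous_comp; [exact: inv_cont | exact: continuous_act_orbit].
Qed.

Lemma setstab_compact O y0 : compact O -> closed O -> O y0 -> compact (setstab O).
Proof.
move=> cpO cO Oy0.
pose K := fst @` ((fun p : G * Y => (act p.1 p.2, p.2)) @^-1` (O `*` [set y0])).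
have cpK : compact K.
  apply: continuous_compact; first by apply: continuous_subspaceT => p; exact: cvg_fst.
  by apply: prop; apply: compact_setX => //; exact: compact_set1.
have -> : setstab O = K `&` setstab O.
  apply/seteqP; split => [x Ox|x []//]; split => //.
  by exists (x, y0) => //; split => //=; have [] := Ox y0 Oy0.
exact: compact_closedI (setstab_closed cO).
Qed.

Lemma compact_subgroup_setstab O y0 :
  compact O -> closed O -> O y0 -> compact_subgroup mul inv one (setstab O).
Proof.
move=> cpO cO Oy0; split; first exact: setstab_compact cpO cO Oy0.
- by move=> z Oz; rewrite -{2}(act1 z) (actVK act1 actM mulV) act1.
- move=> x x' Kx Kx' z Oz; rewrite actM (actVM act1 actM mulV).
  by split; [have [+ _] := Kx _ (Kx' z Oz).1 | have [_ +] := Kx' _ (Kx z Oz).2].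
- by move=> x Kx z Oz; rewrite (actVV act1 actM mulV); have [] := Kx z Oz.
Qed.

Lemma compact_subgroup_of_periodic g y0 P : (0 < P)%N -> iter P (act g) y0 = y0 ->
  exists2 K, compact_subgroup mul inv one K & K g.
Proof.
move=> P0 per; pose O := range (fun i => iter i (act g) y0).
have cpO : compact O := finite_compact (iter_periodic_finite P0 per).
exists (setstab O).
  by apply: (compact_subgroup_setstab cpO (compact_closed hY cpO)); exists 0%N.
move=> _ [i _ <-]; split; first by exists i.+1.
have actgK := actVK act1 actM mulV g.
case: i => [|i]; last by exists i => //=; rewrite actgK.
by exists P.-1 => //; rewrite -{2}per -(prednK P0) /= actgK.
Qed.

Lemma compact_subgroup_orbit_repeat K g y0 F :
  compact_subgroup mul inv one K -> K g -> closed F -> discrete_subset F ->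
  (forall i, F (iter i (act g) y0)) ->
  exists a b, (a < b)%N /\ iter a (act g) y0 = iter b (act g) y0.
Proof.
move=> [cpK K1 KM _] Kg cF dF Fg.
pose S := act ^~ y0 @` K `&` F.
have cpS : compact S.
  apply: compact_closedI cF; apply: continuous_compact cpK.
  by apply: continuous_subspaceT; exact: continuous_act_orbit.
have /compact_discrete_finite : S `<=` F by exact: subIsetr.
move=> /(_ cpS dF) finS; apply/finite_range_repeat/(sub_finite_set _ finS).
move=> _ [i _ <-]; split => //; exists (iter i (mul g) one).
  by elim: i => //= i; exact: KM.
by elim: i => [|i IH] /=; rewrite ?act1 ?actM ?IH.
Qed.
End ProperAction.

Section FixedPointFibres.
Variables (G Y : topologicalType) (mul : G -> G -> G) (inv : G -> G) (one : G)
  (act : G -> Y -> Y) (T Tinv : Y -> Y) (g : G) (n : int).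
Hypotheses (mulV : forall x, mul (inv x) x = one) (inv_cont : continuous inv)
  (act1 : forall y, act one y = y)
  (actM : forall x z y, act (mul x z) y = act x (act z y))
  (act_cont : continuous (fun p : G * Y => act p.1 p.2))
  (prop : proper_action act) (hY : hausdorff_space Y)
  (TK : cancel T Tinv) (KT : cancel Tinv T)
  (comm : forall x, {morph act x : y / T y}).
Local Notation Tp := (Tpow T Tinv).
Local Notation Fix := (fixpts (act (inv g) \o Tp n)).

Lemma fixptsE y : Fix y <-> Tp n y = act g y.
Proof.
split => [fix_y | e]; first by rewrite -[in RHS]fix_y (actKV act1 actM mulV).
by rewrite /fixpts /= e (actVK act1 actM mulV).
Qed.

Lemma fixpts_Tpow k y : Fix y -> Fix (Tp k y).
Proof.
rewrite !fixptsE => e.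
by rewrite -(TpowD TK KT) addrC (TpowD TK KT) e (morph_Tpow TK KT (comm g)).
Qed.

Lemma fixpts_iter i y : Fix y -> iter i (act g) y = Tp (n * i%:Z) y.
Proof.
move/fixptsE => e; elim: i => [|i IH] /=; first by rewrite mulr0.
rewrite IH (morph_Tpow TK KT (comm g)) -e -(TpowD TK KT).
by rewrite -addn1 PoszD mulrDr mulr1.
Qed.

Lemma compact_subgroup_of_finite_fibres y1 : Fix y1 ->
  (forall C, finite_set [set y | Fix y /\ fn T Tinv y = C]) ->
  exists2 K, compact_subgroup mul inv one K & K g.
Proof.
move=> Fy1 fin.
have [a [b [ab e]]] : exists a b, (a < b)%N /\ Tp a y1 = Tp b y1.
  apply/finite_range_repeat/(sub_finite_set _ (fin (fn T Tinv y1))).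
  by move=> _ [k _ <-]; split; [exact: fixpts_Tpow | exact: fn_Tpow].
apply: (compact_subgroup_of_periodic mulV inv_cont act1 actM act_cont prop hY
  (y0 := y1) (P := (b - a)%N)).
  by rewrite subn_gt0.
rewrite (fixpts_iter _ Fy1) -subzn 1?ltnW // mulrC.
exact/Tpow_periodM/(Tpow_period TK KT e).
Qed.

Lemma finite_fibres_of_compact_subgroup K : compact_subgroup mul inv one K -> K g ->
  n != 0 -> closed Fix -> discrete_subset Fix ->
  forall C, finite_set [set y | Fix y /\ fn T Tinv y = C].
Proof.
move=> cK Kg n0 cF dF C.
have [[y0 [Fy0 <-]]|noFibre] := pselect (exists y0, Fix y0 /\ fn T Tinv y0 = C);
  last by apply: (sub_finite_set _ (finite_set0 Y)) => y ?; apply: noFibre; exists y.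
have Fg i : Fix (iter i (act g) y0) by rewrite (fixpts_iter _ Fy0); exact: fixpts_Tpow.
have [a [b [ab e]]] :=
  compact_subgroup_orbit_repeat act1 actM act_cont cK Kg cF dF Fg.
rewrite !(fixpts_iter _ Fy0) in e.
have q0 : n * b%:Z - n * a%:Z != 0.
  by rewrite -mulrBr mulf_neq0 // subr_eq0 eqz_nat gtn_eqF.
apply: (sub_finite_set _ (Tpow_orbit_finite TK KT q0 (Tpow_period TK KT e))).
by move=> y [_ /fn_eq_Tpow[k ->]]; exists k.
Qed.
End FixedPointFibres.

Theorem corollary5p8
  (G : topologicalType) (mul : G -> G -> G) (inv : G -> G) (one : G)
  (Y : topologicalType) (d : nat) (A : atlas Y d)
  (act : G -> Y -> Y) (T Tinv : Y -> Y) (g : G) :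
  locally_compact_group mul inv one ->
  smooth_manifold A ->
  continuous_action mul one act ->
  (forall x : G, smooth_map A (act x)) ->
  proper_action act ->
  cocompact_action act ->
  diffeomorphism A T Tinv ->
  (forall (x : G) (y : Y), act x (T y) = T (act x y)) ->
  (forall n : int, n != 0 ->
     let h := act (inv g) \o Tpow T Tinv n in
     (fixpts h = set0 \/ discrete_subset (fixpts h)) /\
     (forall y, fixpts h y -> forall i, at_dom A i y ->
        \det (1%:M - jac h i y) != 0)) ->
  forall n : int, Lg T Tinv act g n%:~R ->
    (forall C : set (susp T Tinv),
       finite_set [set y | fixpts (act (inv g) \o Tpow T Tinv n) y /\
                           fn T Tinv y = C])
    <-> exists2 K : set G, compact_subgroup mul inv one K & K g.
Proof.
move=> [tg _ _] [hY _ _] [act1 actM act_cont] _ prop _ [[cT _] [cTinv _] TK KT].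
move=> comm hyp n Ln; have mulV := tg_mulV tg.
have n0 : n != 0 by move: Ln.1; rewrite intr_eq0.
have [y1 Fy1] : exists y, fixpts (act (inv g) \o Tpow T Tinv n) y.
  have [y e] := Lg_fixpt TK KT Ln.
  by exists y; apply/(fixptsE T Tinv g n mulV act1 actM).
have dF : discrete_subset (fixpts (act (inv g) \o Tpow T Tinv n)).
  by case: (hyp n n0).1 => [->|//]; move=> y [].
have cF : closed (fixpts (act (inv g) \o Tpow T Tinv n)).
  apply: closed_fixpts hY _ => y; apply: continuous_comp.
    exact: continuous_Tpow.
  exact: (@continuous_act _ _ _ act_cont (inv g)).
split => [fin | [K cK Kg]].
  exact: (compact_subgroup_of_finite_fibres mulV (tg_inv_cont tg) act1 actM act_cont
    prop hY TK KT comm Fy1 fin).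
exact: (finite_fibres_of_compact_subgroup mulV act1 actM act_cont TK KT comm
  cK Kg n0 cF dF).
Qed.
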